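(* Let $N\geq 2$, and let $f:\{0,1\}^N\to\{0,1\}$ be a total function. Then \[\mathrm{H}(\mathrm{C}_f)\leq 10\mathrm{Bal}(f)\log N.\]
   Context: $\mathrm{C}_f(x)$ is the certificate complexity of $f$ at $x$. For $g:\{0,1\}^N\to[0,\infty)$, the H-index $\mathrm{H}(g)$ is the maximum $h$ such that at least $2^h$ inputs satisfy $g(x)\geq h$ (equivalently, the minimum $h$ such that at most $2^h$ inputs satisfy $g(x)>h$). $\mathrm{Bal}(f)$ is $0$ if $f$ is constant, and otherwise $\min\{1+\log|f^{-1}(0)|,\,1+\log|f^{-1}(1)|\}$ (log base 2). *)

From HB Require Import structures.
From mathcomp Require Import all_boot all_order all_algebra.
From mathcomp Require Import all_classical all_reals.
From mathcomp Require Import exp.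

Set Implicit Arguments.
Unset Strict Implicit.
Unset Printing Implicit Defensive.

Import Order.TTheory GRing.Theory Num.Theory.
Local Open Scope classical_set_scope.
Local Open Scope ring_scope.

Definition input (N : nat) := {ffun 'I_N -> bool}.

Definition is_cert (N : nat) (f : input N -> bool) (x : input N)
    (S : {set 'I_N}) : bool :=
  [forall y : input N, [forall i in S, y i == x i] ==> (f y == f x)].

(* Certificate complexity C_f(x): minimum size of a certificate for f at x
   (the full set is always a certificate, so the default N is harmless). *)
Definition cert_cplx (N : nat) (f : input N -> bool) (x : input N) : nat :=
  \big[minn/N]_(S : {set 'I_N} | is_cert f x S) #|S|.

Definition log2 {R : realType} (x : R) : R := ln x / ln 2.

(* H-index of g : {0,1}^N -> [0,oo): the maximum (real) h such that at least
   2^h inputs satisfy g x >= h.  The maximum is attained, so it equals the sup. *)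
Definition Hindex {R : realType} (N : nat) (g : input N -> R) : R :=
  sup [set h : R | 2 `^ h <= (#|[set x : input N | h <= g x]|)%:R].

Definition Bal {R : realType} (N : nat) (f : input N -> bool) : R :=
  if [forall x : input N, forall y : input N, f x == f y] then 0
  else Num.min (1 + log2 (#|[set x : input N | ~~ f x]|)%:R)
               (1 + log2 (#|[set x : input N | f x]|)%:R).

(* Let Y = f^-1(b) be the smaller fibre and K = floor(log2 |Y|) + 1, so |Y| < 2^K.
   If C_f(x) > K and f x <> b, then every set of at most K coordinates of x is
   matched by some y in Y, and x is recovered from Y by majority decoding: as
   long as the coordinatewise majority of the current candidates differs from
   x at some i, keep only the (at most half) candidates dissenting at i, which
   all agree with x at i.  Hence x is determined by a sequence of at most K
   coordinates, so at most |Y| + (N+1)^K < N^(3K) inputs have C_f > K,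
   whence H(C_f) <= 3 K log2 N. *)

From HB Require Import structures.
From mathcomp Require Import all_boot all_order all_algebra.
From mathcomp Require Import all_classical all_reals.
From mathcomp Require Import exp.
From mathcomp Require Import zify lra.

Set Implicit Arguments.
Unset Strict Implicit.
Unset Printing Implicit Defensive.

Import Order.TTheory GRing.Theory Num.Theory.

Section MajorityDecoding.
Variable I : finType.
Implicit Types (Z : {set {ffun I -> bool}}) (x : {ffun I -> bool}).

Definition majority Z (i : I) : bool := (#|Z| <= 2 * #|[set y in Z | y i]|)%N.

Definition dissenters Z i := [set y in Z | y i != majority Z i].

Fixpoint decode Z (s : seq I) : {ffun I -> bool} :=
  if s is i :: s' then decode (dissenters Z i) s' else [ffun i => majority Z i].

Lemma card_dissenters Z i : (2 * #|dissenters Z i| <= #|Z|)%N.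
Proof.
have card_split : (#|[set y in Z | y i]| + #|[set y in Z | ~~ y i]|)%N = #|Z|.
  rewrite -(cardsID [set y : {ffun I -> bool} | y i] Z).
  by congr (_ + _); apply: eq_card => y; rewrite !inE andbC.
rewrite /dissenters; case: (boolP (majority Z i)) => maj.
  have -> : #|[set y in Z | y i != true]| = #|[set y in Z | ~~ y i]|.
    by apply: eq_card => y; rewrite !inE; case: (y i).
  by move: maj; rewrite /majority; lia.
have -> : #|[set y in Z | y i != false]| = #|[set y in Z | y i]|.
  by apply: eq_card => y; rewrite !inE; case: (y i).
by move: maj; rewrite /majority; lia.
Qed.

Lemma decode_complete n Z x :
  (#|Z| < 2 ^ n)%N ->
  (forall S : {set I}, (#|S| <= n)%N ->
     exists2 y, y \in Z & {in S, forall i, y i = x i}) ->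
  exists2 s : seq I, (size s <= n)%N & decode Z s = x.
Proof.
elim: n Z => [|n IHn] Z small_Z agree.
  have [|y yZ _] := agree finset.set0; first by rewrite cards0.
  by move: small_Z; rewrite expn0 ltnS leqn0 cards_eq0 => /eqP Z0; rewrite Z0 inE in yZ.
case: (boolP [forall i, majority Z i == x i]) => [/forallP maj_x | /forallPn [i maj_i]].
  by exists [::] => //; apply/ffunP => i; rewrite ffunE (eqP (maj_x i)).
have small_Z' : (#|dissenters Z i| < 2 ^ n)%N.
  by move: small_Z; rewrite expnS; have := card_dissenters Z i; lia.
have agree' (S : {set I}) : (#|S| <= n)%N ->
    exists2 y, y \in dissenters Z i & {in S, forall j, y j = x j}.
  move=> small_S; have [|y yZ agree_y] := agree (i |: S).
    by rewrite cardsU1; lia.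
  exists y => [|j jS]; last by apply: agree_y; rewrite in_setU1 jS orbT.
  by rewrite inE yZ agree_y ?setU11 // eq_sym.
have [s size_s decode_s] := IHn _ small_Z' agree'.
by exists (i :: s).
Qed.

(* The decodings of the sequences of length at most K, counted through
   K-tuples of options padded with None. *)
Definition decodable Z K :=
  [set decode Z (pmap id (val t)) | t : K.-tuple (option I)].

Lemma card_decodable Z K : (#|decodable Z K| <= #|I|.+1 ^ K)%N.
Proof.
by apply: leq_trans (leq_imset_card _ _) _; rewrite card_tuple card_option.
Qed.

Lemma decode_decodable Z K (s : seq I) :
  (size s <= K)%N -> decode Z s \in decodable Z K.
Proof.
move=> size_s; pose t := map Some s ++ nseq (K - size s) None.
have size_t : size t == K by rewrite size_cat size_map size_nseq subnKC.
apply/imsetP; exists (Tuple size_t) => //=.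
rewrite pmap_cat (map_pK (f := id) (g := Some) (fun _ => erefl)).
by elim: (K - size s) => [|k IHk] /=; rewrite ?cats0.
Qed.

End MajorityDecoding.

Section Certificates.
Variables (N : nat) (f : input N -> bool).

Lemma cert_cplx_le x (S : {set 'I_N}) :
  is_cert f x S -> (cert_cplx f x <= #|S|)%N.
Proof.
move=> cert_S.
by have := bigmin_le_cond N (fun T : {set 'I_N} => #|T|) cert_S; rewrite leEnat minEnat.
Qed.

Lemma cert_cplx_const x : (forall y z, f y = f z) -> cert_cplx f x = 0%N.
Proof.
move=> f_const; apply/eqP; rewrite -leqn0 -(cards0 'I_N).
by apply: cert_cplx_le; apply/forallP => y; rewrite (f_const y x) eqxx implybT.
Qed.

Lemma agree_of_cert_cplx_gt x K (S : {set 'I_N}) :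
  (K < cert_cplx f x)%N -> (#|S| <= K)%N ->
  exists2 y, f y != f x & {in S, forall i, y i = x i}.
Proof.
move=> K_lt_C small_S.
have : ~~ is_cert f x S by apply: contraTN K_lt_C => /cert_cplx_le C_le; lia.
case/forallPn => y; rewrite negb_imply => /andP[/forallP agree_y f_y].
by exists y => // i iS; apply/eqP; have := agree_y i; rewrite iS.
Qed.

Lemma card_cert_cplx_gt b K :
  (#|[set y | f y == b]| < 2 ^ K)%N ->
  (#|[set x | K < cert_cplx f x]| <= #|[set y | f y == b]| + N.+1 ^ K)%N.
Proof.
set Y := [set y | f y == b] => small_Y.
have cover : [set x | K < cert_cplx f x] \subset Y :|: decodable Y K.
  apply/fintype.subsetP => x; rewrite !inE => K_lt_C.
  case: eqP => //= f_x.
  have agree (S : {set 'I_N}) : (#|S| <= K)%N ->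
      exists2 y, y \in Y & {in S, forall i, y i = x i}.
    move=> small_S; have [y f_y agree_y] := agree_of_cert_cplx_gt K_lt_C small_S.
    exists y; rewrite // inE; clear -f_x f_y.
    by move: f_x f_y; case: (f x); case: (f y); case: b.
  have [s size_s <-] := decode_complete small_Y agree.
  exact: decode_decodable.
apply: leq_trans (subset_leq_card cover) _.
apply: leq_trans (leq_card_setU _ _) _.
by rewrite leq_add2l -[in X in (_ <= X)%N](card_ord N) card_decodable.
Qed.

End Certificates.

Lemma add_expS_lt_exp3 (N m K : nat) :
  (2 <= N)%N -> (0 < K)%N -> (m < 2 ^ K)%N -> (m + N.+1 ^ K < N ^ (3 * K))%N.
Proof.
move=> N_ge2 K_gt0 m_lt.
have pow2_le : (2 ^ K <= N ^ K)%N by rewrite leq_exp2r.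
have succ_le : (N.+1 ^ K <= N ^ K * N ^ K)%N by rewrite -expnMn leq_exp2r //; nia.
have pow_ge2 : (2 <= N ^ K)%N by apply: leq_trans pow2_le; rewrite -{1}(expn1 2) leq_exp2l.
rewrite mulnC expnM !expnS expn0 muln1 mulnA.
by nia.
Qed.

Local Open Scope ring_scope.

Lemma card_set_classic (T : finType) (p : pred T) :
  #|[set x | p x]%classic| = #|[set x | p x]|.
Proof. by apply: eq_card => x; rewrite finset.inE; exact: asboolb. Qed.

Lemma Hindex_le (R : realType) (N : nat) (g : input N -> R) (B : R) :
  (forall x, 0 <= g x) ->
  (forall h, B < h -> (#|[set x | h <= g x]|)%:R < 2 `^ h) ->
  Hindex g <= B.
Proof.
move=> g_ge0 small_levels; apply: ge_sup.
  exists 0; rewrite /= card_set_classic powRr0 ler1n; apply/card_gt0P.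
  by exists [ffun=> false]; rewrite inE g_ge0.
move=> h; rewrite /= card_set_classic => large_level.
rewrite leNgt; apply/negP => B_lt_h.
by have := small_levels h B_lt_h; rewrite ltNge large_level.
Qed.

Section Log2.
Variable R : realType.

Lemma powR2_log2 (x : R) : 0 < x -> 2 `^ log2 x = x.
Proof.
move=> x_gt0; rewrite /powR /log2 pnatr_eq0 /= mulfVK ?lnK ?posrE //.
by rewrite gt_eqF // ln_gt0 // ltr1n.
Qed.

Lemma log2_ge1 (N : nat) : (2 <= N)%N -> 1 <= log2 (N%:R : R).
Proof.
move=> N_ge2; rewrite /log2 ler_pdivlMr ?ln_gt0 ?ltr1n // mul1r.
by rewrite ler_ln ?posrE ?ltr0n ?ler_nat //; apply: leq_trans N_ge2.
Qed.

Lemma trunc_log_le_log2 (m : nat) :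
  (0 < m)%N -> (trunc_log 2 m)%:R <= log2 (m%:R : R).
Proof.
move=> m_gt0; have pow_le : (2 ^ trunc_log 2 m <= m)%N := trunc_logP (ltnSn 1) m_gt0.
rewrite /log2 ler_pdivlMr ?ln_gt0 ?ltr1n // mulr_natl -lnXn ?ltr0n //.
by rewrite ler_ln ?posrE ?exprn_gt0 ?ltr0n // -natrX ler_nat.
Qed.

Lemma ltr_nat_powR2 (N K n : nat) (h : R) :
  (0 < N)%N -> (n < N ^ K)%N -> K%:R * log2 (N%:R : R) <= h -> n%:R < 2 `^ h.
Proof.
move=> N_gt0 n_lt exp_le; apply: (@lt_le_trans _ _ (N ^ K)%:R); first by rewrite ltr_nat.
rewrite natrX -powR_mulrn ?ler0n // -{1}(@powR2_log2 N%:R) ?ltr0n // -powRrM.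
by apply: ler_powR; rewrite ?ler1n // mulrC.
Qed.

End Log2.

Lemma Hindex_cert_cplx_const (R : realType) (N : nat) (f : input N -> bool) :
  (forall y z, f y = f z) -> Hindex (fun x => ((cert_cplx f x)%:R : R)) <= 0.
Proof.
move=> f_const; apply: Hindex_le => [x|h h_gt0]; first exact: ler0n.
have -> : #|[set x | h <= ((cert_cplx f x)%:R : R)]| = 0%N.
  by apply: eq_card0 => x; rewrite !inE cert_cplx_const // leNgt h_gt0.
by rewrite powR_gt0.
Qed.

Lemma card_fiber_gt0 (T : finType) (f : T -> bool) (y z : T) (b : bool) :
  f y != f z -> (0 < #|[set x | f x == b]|)%N.
Proof.
move=> f_yz; apply/card_gt0P.
have [f_y | f_y] := eqVneq (f y) b; first by exists y; rewrite inE f_y.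
by exists z; rewrite inE; move: f_y f_yz; case: (f y); case: (f z); case: b.
Qed.

Lemma Hindex_cert_cplx_le (R : realType) (N : nat) (f : input N -> bool) b :
  (2 <= N)%N -> (0 < #|[set x | f x == b]|)%N ->
  Hindex (fun x => ((cert_cplx f x)%:R : R))
    <= 10 * (1 + log2 (#|[set x | f x == b]|)%:R) * log2 (N%:R : R).
Proof.
set m := #|[set x | f x == b]| => N_ge2 m_gt0.
apply: Hindex_le => [x|h bound_lt_h]; first exact: ler0n.
pose K := (trunc_log 2 m).+1.
have m_lt : (m < 2 ^ K)%N := trunc_log_ltn m (ltnSn 1).
have K_le : (K%:R : R) <= 1 + log2 (m%:R : R).
  by rewrite /K -addn1 natrD addrC lerD2l trunc_log_le_log2.
have L_ge1 := @log2_ge1 R N N_ge2.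
have K_ge1 : (1 : R) <= K%:R by rewrite ler1n.
have exp_le : (3 * K)%:R * log2 (N%:R : R) <= h.
  apply/ltW/(le_lt_trans _ bound_lt_h); rewrite natrM.
  by apply: ler_wpM2r; lra.
have K_lt_h : (K%:R : R) < h.
  by apply: lt_le_trans exp_le; rewrite natrM; nra.
have level_sub :
    [set x | h <= ((cert_cplx f x)%:R : R)] \subset [set x | K < cert_cplx f x]%N.
  apply/fintype.subsetP => x; rewrite !inE => h_le.
  by rewrite -(ltr_nat R); apply: lt_le_trans K_lt_h h_le.
apply: ltr_nat_powR2 exp_le; first exact: leq_trans N_ge2.
apply: leq_ltn_trans (subset_leq_card level_sub) _.
apply: leq_ltn_trans (card_cert_cplx_gt m_lt) _.
exact: add_expS_lt_exp3.
Qed.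

Theorem theorem22 (R : realType) (N : nat) (hN : (2 <= N)%N)
    (f : input N -> bool) :
  Hindex (fun x => ((cert_cplx f x)%:R : R))
    <= 10 * Bal (R := R) f * log2 (N%:R : R).
Proof.
rewrite /Bal; case: ifP => [/forallP f_const | /negbT/forallPn[y /forallPn[z f_yz]]].
  rewrite mulr0 mul0r; apply: Hindex_cert_cplx_const => y z.
  by apply/eqP; have /forallP := f_const y; apply.
have card_false : #|[set x | ~~ f x]%classic| = #|[set x | f x == false]|.
  by rewrite card_set_classic; apply: eq_card => x; rewrite !inE; case: (f x).
have card_true : #|[set x | f x]%classic| = #|[set x | f x == true]|.
  by rewrite card_set_classic; apply: eq_card => x; rewrite !inE; case: (f x).
rewrite card_false card_true minEle.
by case: ifP => _; apply: Hindex_cert_cplx_le => //; apply: card_fiber_gt0 f_yz.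
Qed.
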